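(* For the $3\times3$ absorbing game \[ A=\begin{bmatrix}1^* & 1^* & 2^*\\ 1^* & 2^* & 0\\ 2^* & 0 & 1^*\end{bmatrix}, \] let $(x_\lambda)_{\lambda\in(0,1]}$ be any family of optimal stationary strategies of Player 1 in the $\lambda$-discounted games. Then every accumulation point $x=(x^1,x^2,x^3)$ of $x_\lambda$ as $\lambda\to0$ satisfies $x^i>0$ for $i=1,2,3$. Moreover the limit value satisfies $v\ge 4/3$. *)

From HB Require Import structures.
From mathcomp Require Import all_boot all_order all_algebra.
From mathcomp Require Import all_classical all_reals all_analysis.
Set Implicit Arguments. Unset Strict Implicit. Unset Printing Implicit Defensive.
Import Order.TTheory GRing.Theory Num.Theory.
Local Open Scope ring_scope.

Section AbsorbingGame.
Variable R : realType.

Definition gpay (i j : 'I_3) : R :=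
  match nat_of_ord i, nat_of_ord j with
  | 0, 0 => 1 | 0, 1 => 1 | 0, _ => 2
  | 1, 0 => 1 | 1, 1 => 2 | 1, _ => 0
  | _, 0 => 2 | _, 1 => 0 | _, _ => 1
  end.

(* Absorption indicator: every entry is absorbing (starred) except the two
   zero entries at positions (2,3) and (3,2) (1-indexed). *)
Definition pabs (i j : 'I_3) : R :=
  if ((nat_of_ord i == 1%N) && (nat_of_ord j == 2%N)) ||
     ((nat_of_ord i == 2%N) && (nat_of_ord j == 1%N)) then 0 else 1.

(* Mixed actions = stationary strategies (the game has a single non-absorbing state). *)
Definition mixed (x : 'I_3 -> R) : Prop :=
  (forall i, 0 <= x i) /\ \sum_(i < 3) x i = 1.

Definition gnon (x y : 'I_3 -> R) : R :=
  \sum_(i < 3) \sum_(j < 3) x i * y j * (1 - pabs i j) * gpay i j.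
Definition gstar (x y : 'I_3 -> R) : R :=
  \sum_(i < 3) \sum_(j < 3) x i * y j * pabs i j * gpay i j.
Definition pstar (x y : 'I_3 -> R) : R :=
  \sum_(i < 3) \sum_(j < 3) x i * y j * pabs i j.

(* Normalized lambda-discounted payoff, sum_t lam (1-lam)^(t-1) g_t, when the
   players use stationary strategies x, y (payoff of the absorbing entry is
   received at the absorption stage and at all later stages). *)
Definition gamma (lam : R) (x y : 'I_3 -> R) : R :=
  (lam * gnon x y + gstar x y) / (lam * (1 - pstar x y) + pstar x y).

Definition is_disc_value (lam v : R) : Prop :=
  (exists x, mixed x /\ forall y, mixed y -> v <= gamma lam x y) /\
  (exists y, mixed y /\ forall x, mixed x -> gamma lam x y <= v).

Definition optimal1 (lam : R) (x : 'I_3 -> R) : Prop :=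
  mixed x /\ exists v, is_disc_value lam v /\
                       forall y, mixed y -> v <= gamma lam x y.

Definition accum_point (xs : R -> 'I_3 -> R) (x : 'I_3 -> R) : Prop :=
  forall e d : R, 0 < e -> 0 < d ->
    exists lam, 0 < lam /\ lam < d /\ lam <= 1 /\
      forall i, `|xs lam i - x i| < e.

End AbsorbingGame.

(* Every non-absorbing entry of the game has payoff 0, so against stationary
   strategies the discounted payoff is g*(x, y) / (p*(x, y) + lam (1 - p*(x, y))),
   which decreases in lam.  Hence the discounted value increases as lam decreases
   to 0 and, being at most 2, converges.  The uniform strategy of Player 1
   guarantees 4/3 as soon as lam <= 1/4, so the limit is at least 4/3.  An optimal
   strategy x of Player 1 then guarantees 4/3 against each pure column j; as the
   denominator is at least p*, this gives g*(x, e_j) >= 4/3 p*(x, e_j), three linear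
   inequalities which force every coordinate of x to be at least 1/9. *)

From HB Require Import structures.
From mathcomp Require Import all_boot all_order all_algebra.
From mathcomp Require Import all_classical all_reals all_analysis.
From mathcomp Require Import lra.
Import Order.TTheory GRing.Theory Num.Theory.
Import numFieldNormedType.Exports.
Local Open Scope classical_set_scope.
Local Open Scope ring_scope.
Set Implicit Arguments. Unset Strict Implicit. Unset Printing Implicit Defensive.

Notation i0 := (@Ordinal 3 0 isT).
Notation i1 := (@Ordinal 3 1 isT).
Notation i2 := (@Ordinal 3 2 isT).

Lemma ord3P (i : 'I_3) : [\/ i = i0, i = i1 | i = i2].
Proof.
by case: i => [[|[|[|//]]] ?]; [apply: Or31 | apply: Or32 | apply: Or33];
  apply: val_inj.
Qed.

Lemma big_ord3 (V : nmodType) (f : 'I_3 -> V) :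
  \sum_(i < 3) f i = f i0 + f i1 + f i2.
Proof.
rewrite !big_ord_recr big_ord0 /= add0r.
by congr (_ + _ + _); congr f; apply: val_inj.
Qed.

Lemma nonincreasing_cvg_at_right {R : realType} (f : R -> R) (a b t M : R) :
  {in `]a, b[ &, nonincreasing_fun f} -> {in `]a, b[, forall s, f s <= M} ->
  t \in `]a, b[ -> exists2 l : R, f s @[s --> a^'+] --> l & f t <= l.
Proof.
move=> f_noninc f_ub t_ab.
have ubf : has_ubound (f @` [set` `]a, b[]) by exists M => _ [s /f_ub ? <-].
exists (sup (f @` [set` `]a, b[])); last by apply: ub_le_sup => //; exists t.
apply: nonincreasing_at_right_cvgr => //; rewrite bnd_simp.
by move: t_ab; rewrite in_itv => /andP[a_lt_t t_lt_b]; exact: lt_trans a_lt_t t_lt_b.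
Qed.

Section AbsorbingGame.
Variable R : realType.
Implicit Types (lam c w : R) (x y : 'I_3 -> R).

Definition pure (k : 'I_3) : 'I_3 -> R := fun i => (i == k)%:R.

Lemma mixed3P x :
  mixed x <-> [/\ 0 <= x i0, 0 <= x i1, 0 <= x i2 & x i0 + x i1 + x i2 = 1].
Proof.
rewrite /mixed big_ord3; split=> [[x_ge0 ->] | [x0 x1 x2 ->]]; first by split.
by split=> // i; case: (ord3P i) => ->.
Qed.

Lemma mixed_pure k : mixed (pure k).
Proof.
apply/mixed3P; rewrite /pure.
by case: (ord3P k) => -> /=; split; lra.
Qed.

Lemma mixed_uniform : mixed (fun=> 3^-1 : R).
Proof. by apply/mixed3P; split; lra. Qed.

Lemma gnon_eq0 x y : gnon x y = 0.
Proof. by rewrite /gnon !big_ord3 /pabs /gpay /=; lra. Qed.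

Lemma gstarE x y : gstar x y =
  x i0 * y i0 + x i0 * y i1 + 2 * x i0 * y i2 + x i1 * y i0 + 2 * x i1 * y i1
  + 2 * x i2 * y i0 + x i2 * y i2.
Proof. by rewrite /gstar !big_ord3 /pabs /gpay /=; lra. Qed.

Lemma pstarE x y : pstar x y =
  (x i0 + x i1 + x i2) * (y i0 + y i1 + y i2) - x i1 * y i2 - x i2 * y i1.
Proof. by rewrite /pstar !big_ord3 /pabs /=; lra. Qed.

Lemma gstar_ge0 x y : mixed x -> mixed y -> 0 <= gstar x y.
Proof. by move=> /mixed3P[? ? ? _] /mixed3P[? ? ? _]; rewrite gstarE; nra. Qed.

Lemma pstar_itv x y : mixed x -> mixed y -> 0 <= pstar x y <= 1.
Proof.
move=> /mixed3P[? ? ? sx] /mixed3P[? ? ? sy]; rewrite pstarE sx sy.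
by apply/andP; split; nra.
Qed.

Definition gamma_denom lam x y := lam * (1 - pstar x y) + pstar x y.

Lemma gammaE lam x y : gamma lam x y = gstar x y / gamma_denom lam x y.
Proof. by rewrite /gamma gnon_eq0 mulr0 add0r. Qed.

Lemma pstar_le_gamma_denom lam x y : 0 <= lam -> mixed x -> mixed y ->
  pstar x y <= gamma_denom lam x y.
Proof.
move=> lam_ge0 mx my; have /andP[_ p_le1] := pstar_itv mx my.
by rewrite lerDr; apply: mulr_ge0; lra.
Qed.

Lemma gamma_denom_gt0 lam x y : 0 < lam -> lam <= 1 -> mixed x -> mixed y ->
  0 < gamma_denom lam x y.
Proof.
move=> lam_gt0 lam_le1 mx my; rewrite /gamma_denom.
by have := pstar_itv mx my; nra.
Qed.

Lemma gamma_nonincreasing l1 l2 x y : 0 < l1 -> l1 <= l2 -> l2 <= 1 ->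
  mixed x -> mixed y -> gamma l2 x y <= gamma l1 x y.
Proof.
move=> l1_gt0 l12 l2_le1 mx my.
have D1 := gamma_denom_gt0 l1_gt0 (le_trans l12 l2_le1) mx my.
have D2 := gamma_denom_gt0 (lt_le_trans l1_gt0 l12) l2_le1 mx my.
rewrite !gammaE ler_pdivlMr // mulrAC ler_pdivrMr // /gamma_denom.
apply: ler_wpM2l; first exact: gstar_ge0.
by have := pstar_itv mx my; nra.
Qed.

Lemma disc_value_nonincreasing l1 l2 w1 w2 : 0 < l1 -> l1 <= l2 -> l2 <= 1 ->
  is_disc_value l1 w1 -> is_disc_value l2 w2 -> w2 <= w1.
Proof.
move=> l1_gt0 l12 l2_le1 [_ [y1 [my1 y1_opt]]] [[x2 [mx2 x2_opt]] _].
apply: le_trans (x2_opt _ my1) _; apply: le_trans (y1_opt _ mx2).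
exact: gamma_nonincreasing.
Qed.

Lemma disc_value_ub lam w : 0 < lam -> lam <= 1 -> is_disc_value lam w -> w <= 2.
Proof.
move=> lam_gt0 lam_le1 [[x [mx x_opt]] _].
apply: le_trans (x_opt _ (mixed_pure i0)) _.
move: mx => /mixed3P[? ? ? sx].
rewrite gammaE /gamma_denom gstarE pstarE /pure /= sx.
by rewrite !(mul1r, mulr1, mulr0, addr0, add0r, subr0, subrr, divr1); lra.
Qed.

Lemma disc_value_lb lam w : 0 < lam -> lam <= 4^-1 -> is_disc_value lam w ->
  4 / 3 <= w.
Proof.
move=> lam_gt0 lam_small [_ [y [my y_opt]]].
apply: le_trans (y_opt _ mixed_uniform).
have lam_le1 : lam <= 1 by lra.
rewrite gammaE ler_pdivlMr; last exact: gamma_denom_gt0 mixed_uniform my.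
move: my => /mixed3P[? ? ? sy]; rewrite /gamma_denom gstarE pstarE sy.
have : 0 <= (4^-1 - lam) * (y i1 + y i2) by apply: mulr_ge0; lra.
nra.
Qed.

Lemma gstar_ge_of_gamma_ge c lam x y : 0 <= c -> 0 < lam -> lam <= 1 ->
  mixed x -> mixed y -> c <= gamma lam x y -> c * pstar x y <= gstar x y.
Proof.
move=> c_ge0 lam_gt0 lam_le1 mx my.
rewrite gammaE ler_pdivlMr; last exact: gamma_denom_gt0.
by apply: le_trans; apply: ler_wpM2l => //; apply: pstar_le_gamma_denom => //; exact: ltW.
Qed.

Lemma optimal1_lb lam x : 0 < lam -> lam <= 4^-1 -> optimal1 lam x ->
  forall i, 9^-1 <= x i.
Proof.
move=> lam_gt0 lam_small [mx [w [w_val x_opt]]] i.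
have lam_le1 : lam <= 1 by lra.
have col k : 4 / 3 * pstar x (pure k) <= gstar x (pure k).
  apply: (gstar_ge_of_gamma_ge _ lam_gt0 lam_le1 mx (mixed_pure k)); first lra.
  exact: le_trans (disc_value_lb lam_gt0 lam_small w_val) (x_opt _ (mixed_pure k)).
move: (col i0) (col i1) (col i2); rewrite !gstarE !pstarE /pure /=.
rewrite !(mulr0, mulr1, addr0, add0r, subr0).
by move: mx => /mixed3P[? ? ? sx]; case: (ord3P i) => -> /=; lra.
Qed.

End AbsorbingGame.

Theorem mainTheorem4 (R : realType) (xs : R -> 'I_3 -> R) (v : R -> R) :
  (forall lam : R, 0 < lam -> lam <= 1 -> is_disc_value lam (v lam)) ->
  (forall lam : R, 0 < lam -> lam <= 1 -> optimal1 lam (xs lam)) ->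
  (forall x : 'I_3 -> R, accum_point xs x -> forall i, 0 < x i) /\
  (exists l : R, v x @[x --> 0^'+] --> l /\ 4 / 3 <= l).
Proof.
move=> v_val xs_opt; split.
  move=> x x_acc i.
  have [lam [lam_gt0 [lam_small [lam_le1 x_near]]]] :=
    x_acc 18^-1 4^-1 ltac:(lra) ltac:(lra).
  have := optimal1_lb lam_gt0 (ltW lam_small) (xs_opt _ lam_gt0 lam_le1) i.
  by have := x_near i; rewrite ltr_distlC => /andP[? _]; lra.
have v_noninc : {in `]0, 1[ &, nonincreasing_fun v}.
  move=> a b; rewrite !in_itv => /andP[a_gt0 _] /andP[b_gt0 /ltW b_le1] ab.
  apply: (disc_value_nonincreasing a_gt0 ab b_le1 _ (v_val _ b_gt0 b_le1)).
  exact: v_val _ a_gt0 (le_trans ab b_le1).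
have v_le2 : {in `]0, 1[, forall s, v s <= 2}.
  move=> s; rewrite in_itv => /andP[s_gt0 /ltW s_le1].
  exact: disc_value_ub s_gt0 s_le1 (v_val _ s_gt0 s_le1).
have v8_ge : 4 / 3 <= v 8^-1 by apply: (disc_value_lb _ _ (v_val _ _ _)); lra.
have [|l v_cvg v8_le] := nonincreasing_cvg_at_right (t := 8^-1) v_noninc v_le2.
  by rewrite in_itv /=; apply/andP; split; lra.
by exists l; split => //; apply: le_trans v8_le.
Qed.
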